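(* Let $E_1,\dots,E_{k+1}$ be a $\mathbb{Q}$-nef partition of a complete fan $\Sigma$ and $V=\{v_1,\dots,v_k\}$ an amenable collection of vectors subordinate to it. Then the monomials of the Laurent polynomial $\phi_V^*w$ correspond (as points of $M\cap M_V$) exactly to all possible sums $p+\sum_{s=1}^\ell u_s$ with $p\in E_{k+1}$ and $u_1,\dots,u_\ell\in E_1\cup\dots\cup E_k$ (repetitions allowed, $\ell\ge0$) such that $\langle v_i,p+\sum_{s=1}^\ell u_s\rangle=0$ for all $1\le i\le k$.
   Context: $M$ lattice of rank $n$, $N=\mathrm{Hom}(M,\mathbb{Z})$; $\Sigma$ complete fan in $M_\mathbb{R}$, $\Sigma[1]$ primitive ray generators. $\mathbb{Q}$-nef partition: ordered partition $\Sigma[1]=E_1\sqcup\dots\sqcup E_{k+1}$ with convex rational $\Sigma$-piecewise linear functions $\varphi_i$, $\varphi_i(\rho)=\delta_{ij}$ on $E_j$. Amenable collection: $\langle v_i,\rho\rangle=-1$ on $E_i$, $\ge0$ on $E_j$ for $i<j\le k+1$, $=0$ on $E_j$ for $j<i$. $M_V=\{u\in M_\mathbb{R}:\langle v_i,u\rangle=0\ \forall i\}$. Fix $a_\rho\in\mathbb{C}^\times$, extend $V$ to a basis $v_1,\dots,v_n$ of $N$, coordinates $x_j$ on $(\mathbb{C}^\times)^n$ with $x^\rho=\prod_jx_j^{\langle v_j,\rho\rangle}$. $X^\vee:\ \sum_{\rho\in E_i}a_\rho x^\rho=1$ ($1\le i\le k$), $w=\sum_{\rho\in E_{k+1}}a_\rho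 x^\rho$. Recursively $f_i=\sum_{\rho\in E_i}a_\rho\prod_{j<i}f_j^{\langle v_j,\rho\rangle}\prod_{j>k}x_j^{\langle v_j,\rho\rangle}$, and $\phi_V(x_{k+1},\dots,x_n)=(f_1,\dots,f_k,x_{k+1},\dots,x_n)$. A monomial $\prod_{j>k}x_j^{m_j}$ corresponds to the unique $u\in M\cap M_V$ with $\langle v_j,u\rangle=m_j$ for $j>k$. *)

From HB Require Import structures.
From mathcomp Require Import all_boot all_order all_algebra.
From mathcomp Require Import boolp classical_sets reals.
Set Implicit Arguments.
Unset Strict Implicit.
Unset Printing Implicit Defensive.
Import Order.TTheory GRing.Theory Num.Theory.
Local Open Scope ring_scope.
Local Open Scope classical_set_scope.

(* Lattices.  M = Z^n as row vectors 'rV[int]_n, N = Hom(M,Z) = Z^n with  *)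
(* the standard pairing <v,u> = sum_i v_i u_i.  M_R = 'rV[R]_n.           *)
Definition pair {n} (v u : 'rV[int]_n) : int := \sum_(i < n) v 0 i * u 0 i.

Section Real.
Variable R : realType.
Variable n : nat.

Definition pairR (y x : 'rV[R]_n) : R := \sum_(i < n) y 0 i * x 0 i.

Definition toR (u : 'rV[int]_n) : 'rV[R]_n := map_mx (fun z : int => z%:~R) u.

Definition cone (S : seq 'rV[int]_n) : set 'rV[R]_n :=
  [set x | exists l : 'I_(size S) -> R,
     (forall i, 0 <= l i) /\ x = \sum_(i < size S) l i *: toR (nth 0 S i)].

Definition strongly_convex (C : set 'rV[R]_n) : Prop :=
  forall x, C x -> C (- x) -> x = 0.

Definition is_face (T C : set 'rV[R]_n) : Prop :=
  exists y : 'rV[R]_n, (forall x, C x -> 0 <= pairR y x) /\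
    T = C `&` [set x | pairR y x = 0].

Definition is_fan (Sigma : seq (seq 'rV[int]_n)) : Prop :=
  [/\ forall s, s \in Sigma -> strongly_convex (cone s),
      forall s T, s \in Sigma -> is_face T (cone s) ->
        exists2 t, t \in Sigma & cone t = T &
      forall s t, s \in Sigma -> t \in Sigma ->
        is_face (cone s `&` cone t) (cone s) /\
        is_face (cone s `&` cone t) (cone t)].

Definition complete_fan (Sigma : seq (seq 'rV[int]_n)) : Prop :=
  is_fan Sigma /\ forall x : 'rV[R]_n, exists2 s, s \in Sigma & cone s x.

(* rho is a primitive ray generator of Sigma, i.e. an element of Sigma[1] *)
Definition ray_gen (Sigma : seq (seq 'rV[int]_n)) (rho : 'rV[int]_n) : Prop :=
  [/\ rho != 0,
      forall (c : int) (w : 'rV[int]_n), rho = c *: w -> `|c| = 1 &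
      exists2 s, s \in Sigma & cone s = cone [:: rho]].

Definition rat_pl (Sigma : seq (seq 'rV[int]_n)) (phi : 'rV[R]_n -> R) : Prop :=
  forall s, s \in Sigma -> exists q : 'rV[rat]_n,
    forall x, cone s x -> phi x = pairR (map_mx (fun a : rat => ratr a) q) x.

Definition convex_fun (phi : 'rV[R]_n -> R) : Prop :=
  forall (x y : 'rV[R]_n) (t : R), 0 <= t -> t <= 1 ->
    phi (t *: x + (1 - t) *: y) <= t * phi x + (1 - t) * phi y.

(* Q-nef partition: the rays Sigma[1] (listed without repetition in [rays])
   are partitioned into E_1,...,E_{k+1}, with rho in E_(part rho)
   (0-based: part rho : 'I_k.+1), and there are convex rational
   Sigma-piecewise linear phi_i with phi_i(rho) = delta_ij on E_j. *)
Definition qnef_partition (k : nat) (Sigma : seq (seq 'rV[int]_n))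
  (rays : seq 'rV[int]_n) (part : 'rV[int]_n -> 'I_k.+1) : Prop :=
  [/\ uniq rays,
      forall rho, rho \in rays <-> ray_gen Sigma rho &
      exists phi : 'I_k.+1 -> 'rV[R]_n -> R,
        forall i, [/\ rat_pl Sigma (phi i), convex_fun (phi i) &
          forall rho, rho \in rays ->
            phi i (toR rho) = ((i == part rho) : nat)%:R]].
End Real.

(* amenable collection v_1..v_k (0-based v : 'I_k -> N) subordinate to
   the partition E_j = [rho in rays | part rho == j] *)
Definition amenable {n k : nat} (rays : seq 'rV[int]_n)
  (part : 'rV[int]_n -> 'I_k.+1) (v : 'I_k -> 'rV[int]_n) : Prop :=
  forall (i : 'I_k) rho, rho \in rays ->
    [/\ (part rho : nat) = i -> pair (v i) rho = -1,
        (i < part rho)%N -> 0 <= pair (v i) rho &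
        (part rho < i)%N -> pair (v i) rho = 0].

(* Laurent polynomials with integer coefficients over an exponent group X, *)
(* represented as formal lists of terms (coefficient, exponent); the      *)
(* coefficient of x^e is the sum of the coefficients of the terms with    *)
(* exponent e.                                                            *)
Definition lpoly (X : zmodType) := seq (int * X).
Definition lcoef {X : zmodType} (p : lpoly X) (e : X) : int :=
  \sum_(t <- p | t.2 == e) t.1.
Definition lone {X : zmodType} : lpoly X := [:: (1, 0)].
Definition lmul {X : zmodType} (p q : lpoly X) : lpoly X :=
  [seq (s.1 * t.1, s.2 + t.2) | s <- p, t <- q].
Definition lexp {X : zmodType} (p : lpoly X) (e : nat) : lpoly X :=
  iter e (lmul p) lone.
Definition lprod {X : zmodType} (s : seq (lpoly X)) : lpoly X := foldr lmul lone s.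
Definition lsum {X : zmodType} (s : seq (lpoly X)) : lpoly X := flatten s.

Section LG.
Variables (k m : nat).
Local Notation n := (k + m)%N.
(* basis v_1..v_n of N: rows of B; V = first k rows *)
Variable B : 'M[int]_n.
Variables (rays : seq 'rV[int]_n) (part : 'rV[int]_n -> 'I_k.+1).
Local Notation r := (size rays).

Definition vb (j : nat) : 'rV[int]_n :=
  if insub j is Some jj then row jj B else 0.

Definition Vcoll (i : 'I_k) : 'rV[int]_n := row (lshift m i) B.

(* coordinates of u in x_{k+1},...,x_n: (<v_j,u>)_{j > k} *)
Definition xproj (u : 'rV[int]_n) : 'rV[int]_m :=
  \row_(j < m) pair (row (rshift k j) B) u.

(* Exponent group: a-exponents (one formal variable a_rho per ray)
   followed by x-exponents (x_{k+1},...,x_n). *)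
Definition X := 'rV[int]_(r + m).

Definition avar (rho : 'rV[int]_n) : lpoly X :=
  [:: (1, row_mx (\row_(j < r) (((j : nat) == index rho rays) : nat)%:R) 0)].
Definition xmono (e : 'rV[int]_m) : lpoly X := [:: (1, row_mx 0 e)].

(* sum_{rho in E_i} a_rho * prod_{j < size prev} prev_j^{<v_j,rho>} * x^rho *)
Definition fnext (prev : seq (lpoly X)) (i : nat) : lpoly X :=
  lsum [seq lmul (avar rho)
          (lmul (lprod [seq lexp (nth [::] prev j) `|pair (vb j) rho|%N
                        | j <- iota 0 (size prev)])
                (xmono (xproj rho)))
       | rho <- rays & (part rho : nat) == i].

(* fseq i = [:: f_1; ...; f_i] *)
Fixpoint fseq (i : nat) : seq (lpoly X) :=
  if i is i'.+1 then rcons (fseq i') (fnext (fseq i') i') else [::].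

(* phi_V^* w = sum_{rho in E_{k+1}} a_rho prod_{j<=k} f_j^{<v_j,rho>} x^rho *)
Definition pullback_w : lpoly X := fnext (fseq k) k.

(* the monomial x^e occurs in P (with nonzero coefficient in Z[a_rho]) *)
Definition occurs (P : lpoly X) (e : 'rV[int]_m) : Prop :=
  exists a : 'rV[int]_r, lcoef P (row_mx a e) != 0.
End LG.

From HB Require Import structures.
From mathcomp Require Import all_boot all_order all_algebra.
From mathcomp Require Import boolp classical_sets reals.
From mathcomp Require Import zify.
Import Order.TTheory GRing.Theory Num.Theory.
Local Open Scope ring_scope.
Set Implicit Arguments. Unset Strict Implicit. Unset Printing Implicit Defensive.

(* All coefficients of phi_V^* w are sums of products of the positive
   formal coefficients a_rho, so nothing cancels and the monomials are exactly
   the exponents of the formal expansion.  Unfolding the recursion, an exponent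
   of f_q is x^rho for some rho in E_q plus, for each j < q, |<v_j, rho>|
   exponents of f_j: a tree of rays.  Amenability makes the pairings telescope,
   so the rays of a tree of f_q sum to a vector u with <v_j, u> = -delta_jq;
   hence an exponent of phi_V^* w is p + (lower rays) with all pairings zero,
   and the point is recovered from its pairings with the basis of N.
   Conversely, given such a sum, the trees are assembled bottom-up: a ray of
   minimal level q needs |<v_j, rho>| finished trees of each level j < q, and
   the pairing identity guarantees that they are available. *)

Lemma split_by_count (T K : eqType) (key : T -> K) (F : seq T) (c : K -> nat) :
  (forall j, c j <= count (fun x => key x == j) F)%N ->
  exists F1 F2, perm_eq F (F1 ++ F2) /\
    forall j, count (fun x => key x == j) F1 = c j.
Proof.
elim: F c => [|x F IH] c hc.
  by exists [::], [::]; split => // j; have := hc j; rewrite leqn0 => /eqP.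
have [cx0|cx_gt0] := posnP (c (key x)).
  have [|F1 [F2 [hF hcnt]]] := IH c.
    by move=> j; have := hc j; rewrite /=; case: eqP => [<-|_]; rewrite ?cx0.
  exists F1, (x :: F2); split => //.
  by rewrite perm_sym (perm_catCA F1 [:: x] F2) /= perm_cons perm_sym.
have [|F1 [F2 [hF hcnt]]] := IH (fun j => c j - (key x == j))%N.
  by move=> j; have := hc j; rewrite /=; lia.
exists (x :: F1), F2; split; first by rewrite /= perm_cons.
by move=> j /=; rewrite hcnt; case: eqP => [<-|] /=; lia.
Qed.

Lemma exists_argmin_seq (T : eqType) (f : T -> nat) (t : seq T) : t != [::] ->
  exists2 x, x \in t & forall y, y \in t -> (f x <= f y)%N.
Proof.
move=> t_nil; have hex : exists n, has (fun x => f x == n) t.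
  by case: t t_nil => // x t _; exists (f x); rewrite /= eqxx.
case: (ex_minnP hex) => n /hasP [x hx /eqP fx] hmin.
by exists x => // y hy; rewrite fx; apply: hmin; apply/hasP; exists y.
Qed.

Lemma count_fst_eq0 (T : eqType) (L : seq (nat * T)) j :
  (forall x, x \in L -> x.1 != j) -> count (fun x => x.1 == j) L = 0%N.
Proof. by move=> hL; apply/eqP; rewrite eqn0Ngt -has_count; apply/hasP => -[x /hL /negbTE ->]. Qed.

Section Support.
Variables r m : nat.
Local Notation E := 'rV[int]_(r + m).
Local Notation V := 'rV[int]_m.

Definition xsupport (P : lpoly E) (e : V) : Prop :=
  exists2 t, t \in P & rsubmx t.2 = e.

Definition pos_terms (P : lpoly E) : bool := all (fun t => 0 < t.1) P.

Lemma xsupport_lone e : xsupport lone e <-> e = 0.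
Proof.
split; first by case=> t; rewrite inE => /eqP -> <-; apply/matrixP => i j; rewrite !mxE.
by move=> ->; exists (1, 0); rewrite ?inE //; apply/matrixP => i j; rewrite !mxE.
Qed.

Lemma xsupport_lmul P Q e :
  xsupport (lmul P Q) e <-> exists a b, [/\ xsupport P a, xsupport Q b & e = a + b].
Proof.
have rsubmxD (x y : E) : rsubmx (x + y) = rsubmx x + rsubmx y.
  by apply/matrixP => i j; rewrite !mxE.
split.
  case=> _ /allpairsP [[s t] [/= hs ht ->]] <-.
  by exists (rsubmx s.2), (rsubmx t.2); split; [exists s | exists t | rewrite rsubmxD].
case=> _ [_ [[s hs <-] [t ht <-] ->]].
by exists (s.1 * t.1, s.2 + t.2); [apply/allpairsP; exists (s, t) | rewrite rsubmxD].
Qed.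

Lemma xsupport_lsum Ps e : xsupport (lsum Ps) e <-> exists2 P, P \in Ps & xsupport P e.
Proof.
split; first by case=> t /flattenP [P hP ht] <-; exists P => //; exists t.
by case=> P hP [t ht <-]; exists t => //; apply/flattenP; exists P.
Qed.

Lemma xsupport_lexp P c e :
  xsupport (lexp P c) e <->
  exists l : seq V, [/\ size l = c, forall a, a \in l -> xsupport P a & e = \sum_(a <- l) a].
Proof.
elim: c e => [|c IH] e.
  rewrite xsupport_lone; split => [-> | [l [/size0nil -> _ ->]]]; last exact: big_nil.
  by exists [::]; rewrite big_nil.
rewrite [lexp _ _]/= xsupport_lmul; split.
  case=> a [b [ha /IH [l [<- hl ->]] ->]].
  exists (a :: l); split => //; last by rewrite big_cons.
  by move=> x; rewrite inE => /orP [/eqP -> | /hl].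
case=> [[|a l] [//= [hsz] hl ->]].
exists a, (\sum_(x <- l) x); rewrite big_cons; split => //; first exact/hl/mem_head.
by apply/IH; exists l; split => // x hx; apply/hl; rewrite inE hx orbT.
Qed.

Lemma xsupport_lprod_lexp (G : nat -> lpoly E) (c : nat -> nat) (s : seq nat) e :
  uniq s ->
  xsupport (lprod [seq lexp (G j) (c j) | j <- s]) e <->
  exists L : seq (nat * V),
    [/\ forall x, x \in L -> x.1 \in s /\ xsupport (G x.1) x.2,
        forall j, j \in s -> count (fun x => x.1 == j) L = c j &
        e = \sum_(x <- L) x.2].
Proof.
elim: s e => [|j s IH] e.
  move=> _; rewrite xsupport_lone; split => [-> | [[|x L] [hL _ ->]]].
  - by exists [::]; rewrite big_nil.
  - exact: big_nil.
  - by have [] := hL x (mem_head _ _).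
case/andP => js us; rewrite [lprod _]/= xsupport_lmul; split.
  case=> a [b [/xsupport_lexp [l [hsz hl ->]] /(IH _ us) [L [hL hcnt ->]] ->]].
  have cntL : count (fun x => x.1 == j) L = 0%N.
    by apply: count_fst_eq0 => x /hL [+ _]; apply: contraTneq => ->.
  exists ([seq (j, a) | a <- l] ++ L); split.
  - move=> x; rewrite mem_cat => /orP [/mapP [y hy ->] | /hL [hx hGx]].
      by rewrite mem_head; split => //; apply: hl.
    by rewrite inE hx orbT.
  - move=> i; rewrite count_cat inE => /orP [/eqP -> | hi].
      by rewrite cntL addn0 count_map -hsz -count_predT; apply: eq_count => y; rewrite /= eqxx.
    rewrite (hcnt i hi) -[c i]add0n; congr (_ + _)%N.
    by apply: count_fst_eq0 => _ /mapP [y _ ->] /=; apply: contraNneq js => ->.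
  - by rewrite big_cat big_map.
case=> L [hL hcnt ->].
exists (\sum_(x <- L | x.1 == j) x.2), (\sum_(x <- L | x.1 != j) x.2).
split; last by rewrite (bigID (fun x => x.1 == j)).
- apply/xsupport_lexp; exists [seq x.2 | x <- L & x.1 == j]; split.
  + by rewrite size_map size_filter hcnt ?mem_head.
  + by move=> a /mapP [x]; rewrite mem_filter => /andP [/eqP <- /hL [_ ?]] ->.
  + by rewrite big_map big_filter.
- apply/IH => //; exists [seq x <- L | x.1 != j]; split; last by rewrite big_filter.
  + move=> x; rewrite mem_filter => /andP [xj /hL [+ hGx]].
    by rewrite inE (negbTE xj).
  + move=> i hi; rewrite count_filter -hcnt ?inE ?hi ?orbT //.
    apply: eq_count => x /=; case: eqP => // ->.
    by apply: contraNneq js => <-.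
Qed.

Lemma pos_terms_lmul P Q : pos_terms P -> pos_terms Q -> pos_terms (lmul P Q).
Proof.
move=> /allP hP /allP hQ; apply/allP => _ /allpairsP [[s t] [/= hs ht ->]].
exact: mulr_gt0 (hP _ hs) (hQ _ ht).
Qed.

Lemma pos_terms_lexp P c : pos_terms P -> pos_terms (lexp P c).
Proof. by move=> hP; elim: c => //= c; apply: pos_terms_lmul. Qed.

Lemma pos_terms_lprod Ps : all pos_terms Ps -> pos_terms (lprod Ps).
Proof. by elim: Ps => //= P Ps IH /andP [hP /IH]; apply: pos_terms_lmul. Qed.

Lemma pos_terms_lsum Ps : all pos_terms Ps -> pos_terms (lsum Ps).
Proof.
by elim: Ps => //= P Ps IH /andP [hP /IH]; rewrite /pos_terms all_cat => ->; rewrite andbT.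
Qed.

Lemma pos_terms_occurs P e : pos_terms P ->
  (exists a : 'rV[int]_r, lcoef P (row_mx a e) != 0) <-> xsupport P e.
Proof.
move=> hP; split.
  case=> a; apply: contraNP => he; rewrite /lcoef big_seq_cond big1 // => t /andP [ht /eqP h2].
  by case: he; exists t => //; rewrite h2 row_mxKr.
case=> t ht <-; exists (lsubmx t.2); rewrite hsubmxK /lcoef.
rewrite (perm_big _ (perm_to_rem ht)) big_cons eqxx gt_eqF //.
apply: ltr_pwDl; first exact: (allP hP).
by rewrite big_seq_cond sumr_ge0 // => s /andP [/mem_rem /(allP hP) /ltW].
Qed.
End Support.
Arguments pos_terms {r m} P.

Section Pairing.
Variable n : nat.
Implicit Types (v u w : 'rV[int]_n).

Lemma pairD v u w : pair v (u + w) = pair v u + pair v w.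
Proof. by rewrite /pair -big_split; apply: eq_bigr => i _; rewrite mxE mulrDr. Qed.

Lemma pair0 v : pair v 0 = 0.
Proof. by rewrite /pair big1 // => i _; rewrite mxE mulr0. Qed.

Lemma pair_sum v (s : seq 'rV[int]_n) :
  pair v (\sum_(x <- s) x) = \sum_(x <- s) pair v x.
Proof. exact: (big_morph _ (pairD v) (pair0 v)). Qed.

Lemma pair_rowE (A : 'M[int]_n) i u : pair (row i A) u = (A *m u^T) i 0.
Proof. by rewrite mxE; apply: eq_bigr => j _; rewrite !mxE. Qed.

Lemma eq_of_pairings (A : 'M[int]_n) u w : A \in unitmx ->
  (forall i, pair (row i A) u = pair (row i A) w) -> u = w.
Proof.
move=> A_unit hAuw; apply: trmx_inj; rewrite -(mulKmx A_unit u^T) -(mulKmx A_unit w^T).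
by congr (_ *m _); apply/matrixP => i j; rewrite (ord1 j) -!pair_rowE hAuw.
Qed.
End Pairing.

Section Pullback.
Variables (k m : nat) (B : 'M[int]_(k + m)).
Variables (rays : seq 'rV[int]_(k + m)) (part : 'rV[int]_(k + m) -> 'I_k.+1).
Local Notation W := 'rV[int]_(k + m).
Local Notation V := 'rV[int]_m.
Local Notation fseq := (fseq B rays part).
Local Notation fnext := (@fnext k m B rays part).
Local Notation xproj := (xproj B).

Lemma xprojD u w : xproj (u + w) = xproj u + xproj w.
Proof. by apply/matrixP => i j; rewrite !mxE pairD. Qed.

Lemma xproj0 : xproj 0 = 0.
Proof. by apply/matrixP => i j; rewrite !mxE pair0. Qed.

Lemma eq_of_pairings_xproj u w : B \in unitmx ->
  (forall i : 'I_k, pair (Vcoll B i) u = pair (Vcoll B i) w) ->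
  xproj u = xproj w -> u = w.
Proof.
move=> B_unit hV hx; apply: (eq_of_pairings B_unit) => i.
case: (splitP i) => j ij.
  have -> : i = lshift m j by apply: val_inj.
  exact: hV.
have -> : i = rshift k j by apply: val_inj.
by have := congr1 (fun y : V => y 0 j) hx; rewrite !mxE.
Qed.

Lemma vbE (j : 'I_k) : vb B j = Vcoll B j.
Proof. by rewrite /vb insubT ?ltn_addr // => lt_jn; congr row; apply: val_inj. Qed.

Lemma size_fseq i : size (fseq i) = i.
Proof. by elim: i => //= i IH; rewrite size_rcons IH. Qed.

Lemma nth_fseq_addn i d j : (j < i)%N -> nth [::] (fseq (i + d)) j = nth [::] (fseq i) j.
Proof.
move=> lt_ji; elim: d => [|d IH]; first by rewrite addn0.
by rewrite addnS /= nth_rcons size_fseq IH ltn_addr.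
Qed.

Lemma nth_fseq i j : (j < i)%N -> nth [::] (fseq i) j = fnext (fseq j) j.
Proof.
move=> lt_ji; rewrite -(subnKC lt_ji) nth_fseq_addn //=.
by rewrite nth_rcons size_fseq ltnn eqxx.
Qed.

Definition level_support (q : nat) : V -> Prop := xsupport (nth [::] (fseq k) q).

Lemma level_support_lt q e : level_support q e -> (q < k)%N.
Proof.
move=> [t t_in _]; rewrite ltnNge; apply/negP => le_kq.
by rewrite nth_default ?size_fseq in t_in.
Qed.

(* The exponent <v_j, rho> of f_j in the term of rho, levels counted from 0 as in fseq. *)
Definition ray_exponent (rho : W) (j : nat) : nat :=
  if (j < part rho)%N then `|pair (vb B j) rho|%N else 0%N.

Lemma xsupport_avar rho e : xsupport (avar rays rho) e <-> e = 0.
Proof.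
split; first by case=> t; rewrite inE => /eqP -> <-; rewrite row_mxKr.
by move=> ->; exists (avar rays rho)`_0; rewrite ?inE //= row_mxKr.
Qed.

Lemma xsupport_xmono x e : xsupport (xmono rays x) e <-> e = x.
Proof.
split; first by case=> t; rewrite inE => /eqP -> <-; rewrite row_mxKr.
by move=> ->; exists (xmono rays x)`_0; rewrite ?inE //= row_mxKr.
Qed.

Lemma count_level_lt (L : seq (nat * V)) rho x :
  (forall j, count (fun x => x.1 == j) L = ray_exponent rho j) ->
  x \in L -> (x.1 < part rho)%N.
Proof.
move=> hcnt xL; move: (hcnt x.1); rewrite /ray_exponent; case: ltnP => // _.
by apply: contra_eqT => _; rewrite -lt0n -has_count; apply/hasP; exists x.
Qed.

Lemma xsupport_fnext q : (q <= k)%N -> forall e,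
  xsupport (fnext (fseq q) q) e <->
  exists2 rho, rho \in rays /\ (part rho : nat) = q &
    exists L : seq (nat * V),
      [/\ forall x, x \in L -> level_support x.1 x.2,
          forall j, count (fun x => x.1 == j) L = ray_exponent rho j &
          e = \sum_(x <- L) x.2 + xproj rho].
Proof.
move=> le_qk e; have nthE j : (j < q)%N -> nth [::] (fseq q) j = nth [::] (fseq k) j.
  by move=> lt_jq; rewrite -(nth_fseq_addn (k - q) lt_jq) subnKC.
rewrite /fnext xsupport_lsum size_fseq; split.
  case=> P /mapP [rho]; rewrite mem_filter => /andP [/eqP rho_q rho_in] ->.
  case/xsupport_lmul => a0 [b [/xsupport_avar -> +] ->].
  case/xsupport_lmul => a [c [ha /xsupport_xmono -> ->]].
  case/(xsupport_lprod_lexp _ _ _ (iota_uniq 0 q)): ha => L [hL hcnt ->].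
  exists rho => //; exists L; split; last by rewrite add0r.
  - by move=> x /hL []; rewrite mem_iota add0n /= => lt_xq; rewrite /level_support -nthE.
  - move=> j; rewrite /ray_exponent rho_q; case: ltnP => [lt_jq | le_qj].
      by rewrite hcnt // mem_iota.
    apply: count_fst_eq0 => x /hL [+ _]; rewrite mem_iota add0n.
    by apply: contraTneq => ->; rewrite ltnNge le_qj.
case=> rho [rho_in rho_q] [L [hL hcnt ->]].
have lt_Lq x : x \in L -> (x.1 < q)%N by rewrite -rho_q; apply: count_level_lt.
eexists; first by apply/mapP; exists rho => //; rewrite mem_filter rho_q eqxx.
apply/xsupport_lmul; exists 0, (\sum_(x <- L) x.2 + xproj rho).
split; [exact/xsupport_avar | | by rewrite add0r].
apply/xsupport_lmul; exists (\sum_(x <- L) x.2), (xproj rho).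
split; [ | exact/xsupport_xmono | by []].
apply/(xsupport_lprod_lexp _ _ _ (iota_uniq 0 q)); exists L; split => //.
- move=> x xL; rewrite mem_iota add0n lt_Lq // nthE ?lt_Lq //.
  by split => //; apply: hL.
- by move=> j; rewrite mem_iota add0n /= => lt_jq; rewrite hcnt /ray_exponent rho_q lt_jq.
Qed.

Lemma pos_terms_fnext prev i : all pos_terms prev -> pos_terms (fnext prev i).
Proof.
move=> pos_prev; apply/pos_terms_lsum/allP => _ /mapP [rho _ ->].
apply: pos_terms_lmul => //; apply: pos_terms_lmul => //.
apply/pos_terms_lprod/allP => _ /mapP [j _ ->]; apply: pos_terms_lexp.
have [lt_j | le_j] := ltnP j (size prev); first exact/(allP pos_prev)/mem_nth.
by rewrite nth_default.
Qed.

Lemma pos_terms_fseq i : all pos_terms (fseq i).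
Proof. by elim: i => //= i IH; rewrite all_rcons IH andbT; apply: pos_terms_fnext. Qed.

Lemma pos_terms_pullback : pos_terms (pullback_w B rays part).
Proof. exact/pos_terms_fnext/pos_terms_fseq. Qed.

Definition lower_ray (x : W) : bool := (x \in rays) && (part x != ord_max).

Lemma lower_rayE x : lower_ray x = (x \in rays) && (part x < k)%N.
Proof. by rewrite /lower_ray -(inj_eq val_inj) /= ltn_neqAle -ltnS ltn_ord andbT. Qed.

Definition lower_sum (c : 'I_k -> int) (e : V) : Prop :=
  exists t : seq W, [/\ all lower_ray t, e = xproj (\sum_(x <- t) x) &
    forall j, pair (Vcoll B j) (\sum_(x <- t) x) = c j].

Lemma lower_sum0 : lower_sum (fun _ => 0) 0.
Proof. by exists [::]; rewrite big_nil xproj0; split => // j; rewrite pair0. Qed.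

Lemma lower_sumD c c' a b :
  lower_sum c a -> lower_sum c' b -> lower_sum (fun j => c j + c' j) (a + b).
Proof.
case=> t [low_t -> ct] [t' [low_t' -> ct']]; exists (t ++ t').
by rewrite all_cat low_t low_t' big_cat xprojD; split => // j; rewrite pairD ct ct'.
Qed.

Lemma lower_sum_ext c c' e : c =1 c' -> lower_sum c e -> lower_sum c' e.
Proof. by move=> cc' [t [low_t et ct]]; exists t; split => // j; rewrite ct cc'. Qed.

Lemma lower_sum_ray rho : lower_ray rho ->
  lower_sum (fun j => pair (Vcoll B j) rho) (xproj rho).
Proof. by move=> low_rho; exists [:: rho]; rewrite /= low_rho big_seq1. Qed.

Lemma lower_sum_levels (L : seq (nat * V)) :
  (forall x, x \in L -> lower_sum (fun j => - ((j : nat) == x.1)%:Z) x.2) ->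
  lower_sum (fun j => - (count (fun x => x.1 == (j : nat)) L)%:Z) (\sum_(x <- L) x.2).
Proof.
elim: L => [|x L IH] hL; first by rewrite big_nil; apply: lower_sum_ext lower_sum0 => j.
rewrite big_cons; apply: lower_sum_ext (lower_sumD (hL x (mem_head _ _)) (IH _)) => [j|].
  by rewrite /= eq_sym PoszD opprD.
by move=> y yL; apply: hL; rewrite inE yL orbT.
Qed.

Hypothesis amen : amenable rays part (Vcoll B).

Lemma pair_ray_ge0 (j : 'I_k) rho : rho \in rays -> (j < part rho)%N ->
  0 <= pair (Vcoll B j) rho.
Proof. by move=> rho_in; case: (amen j rho_in). Qed.

Lemma pair_ray (j : 'I_k) rho : rho \in rays ->
  pair (Vcoll B j) rho = (ray_exponent rho j)%:Z - ((j : nat) == part rho)%:Z.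
Proof.
move=> rho_in; have [pair_eq pair_ge0 pair_0] := amen j rho_in.
rewrite /ray_exponent vbE; case: ltngtP => [lt_j | gt_j | eq_j].
- by rewrite gez0_abs ?subr0 // pair_ge0.
- by rewrite pair_0.
- by rewrite pair_eq.
Qed.

Lemma level_support_lower_sum q e :
  level_support q e -> lower_sum (fun j => - ((j : nat) == q)%:Z) e.
Proof.
elim/ltn_ind: q e => q IH e he; have lt_qk := level_support_lt he.
move: he; rewrite /level_support nth_fseq //.
case/(xsupport_fnext (ltnW lt_qk)) => rho [rho_in rho_q] [L [hL cntL ->]].
have low_rho : lower_ray rho by rewrite lower_rayE rho_in rho_q.
have lowL x : x \in L -> lower_sum (fun j => - ((j : nat) == x.1)%:Z) x.2.
  by move=> xL; apply: IH (hL x xL); rewrite -rho_q; apply: count_level_lt xL.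
apply: lower_sum_ext (lower_sumD (lower_sum_levels lowL) (lower_sum_ray low_rho)) => j.
by rewrite pair_ray // cntL rho_q addKr.
Qed.

Lemma level_support_node rho (F : seq (nat * V)) :
  lower_ray rho -> (forall x, x \in F -> level_support x.1 x.2) ->
  (forall j, ray_exponent rho j <= count (fun x => x.1 == j) F)%N ->
  exists F' : seq (nat * V),
    [/\ forall x, x \in F' -> level_support x.1 x.2,
        forall j, (count (fun x => x.1 == j) F' + ray_exponent rho j =
                   count (fun x => x.1 == j) F + (j == part rho))%N &
        \sum_(x <- F') x.2 = \sum_(x <- F) x.2 + xproj rho].
Proof.
rewrite lower_rayE => /andP [rho_in lt_rho_k] hF avail.
have [F1 [F2 [permF cntF1]]] := split_by_count avail.
have memF x : x \in F1 ++ F2 -> level_support x.1 x.2 by rewrite -(perm_mem permF); apply: hF.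
exists ((part rho : nat, \sum_(x <- F1) x.2 + xproj rho) :: F2); split.
- move=> x; rewrite inE => /predU1P [-> | xF2]; last by apply: memF; rewrite mem_cat xF2 orbT.
  rewrite /level_support nth_fseq //; apply/(xsupport_fnext (ltnW lt_rho_k)).
  by exists rho => //; exists F1; split => // y yF1; apply: memF; rewrite mem_cat yF1.
- by move=> j; rewrite (permP permF) count_cat cntF1 /= eq_sym; lia.
- by rewrite big_cons (perm_big _ permF) big_cat /= addrAC.
Qed.

Lemma lower_rays_assemble (t : seq W) (F : seq (nat * V)) (d : nat -> nat) :
  all lower_ray t -> (forall x, x \in F -> level_support x.1 x.2) ->
  (forall j, (k <= j)%N -> d j = 0%N) ->
  (forall j : 'I_k, pair (Vcoll B j) (\sum_(x <- t) x) =
     (count (fun x => x.1 == (j : nat)) F)%:Z - (d j)%:Z) ->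
  exists L : seq (nat * V),
    [/\ forall x, x \in L -> level_support x.1 x.2,
        forall j, count (fun x => x.1 == j) L = d j &
        \sum_(x <- L) x.2 = xproj (\sum_(x <- t) x) + \sum_(x <- F) x.2].
Proof.
(* F holds the finished trees not yet grafted; d j is the number of trees of
   level j that are still to be produced. *)
move=> + + d_ge_k; have [n] := ubnP (size t); elim: n t F => // n IH t F lt_tn low_t hF pair_t.
have [t0 | t_nil] := eqVneq t [::].
  exists F; split => //; last by rewrite t0 big_nil xproj0 add0r.
  move=> j; have [lt_jk | le_kj] := ltnP j k.
    by have := pair_t (Ordinal lt_jk); rewrite t0 big_nil pair0 /=; lia.
  rewrite d_ge_k // count_fst_eq0 // => x /hF /level_support_lt.
  by apply: contraTneq => ->; rewrite ltnNge le_kj.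
have [rho rho_t min_rho] := exists_argmin_seq (fun x => nat_of_ord (part x)) t_nil.
have low_rho := allP low_t rho rho_t; have /andP [rho_in _] := low_rho.
have sum_t : \sum_(x <- t) x = rho + \sum_(x <- rem rho t) x.
  by rewrite (perm_big _ (perm_to_rem rho_t)) big_cons.
have low_rem : all lower_ray (rem rho t) by apply/allP => x /mem_rem /(allP low_t).
have avail j : (ray_exponent rho j <= count (fun x => x.1 == j) F)%N.
  rewrite /ray_exponent; case: ltnP => // lt_j_rho.
  have lt_jk : (j < k)%N by move: low_rho; rewrite lower_rayE => /andP [_ /(ltn_trans lt_j_rho)].
  have rem_ge0 : 0 <= pair (Vcoll B (Ordinal lt_jk)) (\sum_(x <- rem rho t) x).
    rewrite pair_sum big_seq sumr_ge0 // => x /mem_rem x_t; apply: pair_ray_ge0.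
      by have /andP [] := allP low_t x x_t.
    exact: leq_trans lt_j_rho (min_rho x x_t).
  have := pair_t (Ordinal lt_jk); rewrite sum_t pairD pair_ray //= /ray_exponent lt_j_rho.
  by rewrite ltn_eqF //; move: (pair _ _) rem_ge0 => P; lia.
have [F' [hF' cntF' sumF']] := level_support_node low_rho hF avail.
have [||L [hL cntL sumL]] := IH (rem rho t) F' _ low_rem hF'.
- by rewrite size_rem // -ltnS (leq_trans _ lt_tn) // prednK // lt0n size_eq0.
- move=> j; have := pair_t j; have := cntF' j; rewrite sum_t pairD pair_ray //.
  by move: (pair _ _) => P; lia.
exists L; split => //.
by rewrite sumL sumF' sum_t xprojD addrA addrC addrA.
Qed.

Lemma pullback_support_sound u : B \in unitmx ->
  (forall i : 'I_k, pair (Vcoll B i) u = 0) ->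
  xsupport (pullback_w B rays part) (xproj u) ->
  exists p s, [/\ p \in rays, part p = ord_max, all lower_ray s & u = p + \sum_(x <- s) x].
Proof.
move=> B_unit u_perp /(xsupport_fnext (leqnn k)) [p [p_in p_k] [L [hL cntL xu]]].
have [t [low_t xt pair_t]] :=
  lower_sum_levels (fun x xL => level_support_lower_sum (hL x xL)).
exists p, t; split => //; first exact: val_inj.
apply: (eq_of_pairings_xproj B_unit) => [j|]; last by rewrite xu xprojD -xt addrC.
by rewrite u_perp pairD pair_t pair_ray // cntL p_k ltn_eqF // subr0 addrN.
Qed.

Lemma pullback_support_complete p s : p \in rays -> part p = ord_max -> all lower_ray s ->
  (forall i : 'I_k, pair (Vcoll B i) (p + \sum_(x <- s) x) = 0) ->
  xsupport (pullback_w B rays part) (xproj (p + \sum_(x <- s) x)).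
Proof.
move=> p_in p_max low_s perp; have p_k : (part p : nat) = k by rewrite p_max.
have [|||L [hL cntL sumL]] := @lower_rays_assemble s [::] (ray_exponent p) low_s.
- by [].
- by move=> j; rewrite /ray_exponent p_k ltnNge => ->.
- move=> j; have := perp j; rewrite pairD pair_ray // p_k ltn_eqF //=; lia.
apply/(xsupport_fnext (leqnn k)); exists p => //; exists L; split => //.
by rewrite sumL big_nil addr0 xprojD addrC.
Qed.
End Pullback.

Theorem proposition2p17 (R : realType) (k m : nat)
  (Sigma : seq (seq 'rV[int]_(k + m)))
  (rays : seq 'rV[int]_(k + m)) (part : 'rV[int]_(k + m) -> 'I_k.+1)
  (B : 'M[int]_(k + m)) :
  complete_fan R Sigma ->
  qnef_partition R Sigma rays part ->
  B \in unitmx ->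
  amenable rays part (Vcoll B) ->
  forall u : 'rV[int]_(k + m),
    ((forall i : 'I_k, pair (Vcoll B i) u = 0) /\
     occurs (pullback_w B rays part) (xproj B u))
    <->
    (exists p : 'rV[int]_(k + m), exists s : seq 'rV[int]_(k + m),
       [/\ p \in rays, part p = ord_max,
           all (fun x => (x \in rays) && (part x != ord_max)) s,
           u = p + \sum_(x <- s) x &
           forall i : 'I_k, pair (Vcoll B i) u = 0]).
Proof.
move=> _ _ B_unit amen u; rewrite /occurs (pos_terms_occurs _ (pos_terms_pullback _ _ _)).
split => [[u_perp u_supp] | [p [s [p_in p_max low_s u_eq u_perp]]]].
  have [p [s [p_in p_max low_s u_eq]]] := pullback_support_sound amen B_unit u_perp u_supp.
  by exists p, s.
by split => //; rewrite u_eq; apply: pullback_support_complete; rewrite -?u_eq.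
Qed.
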